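(* Let $n\ge2$, $\omega\in\mathbb{R}^n$, $k\in\mathbb{R}_{>0}^n$ satisfy (IC1) $\sum_\mu\omega_\mu=0$, (IC2) $\omega\ne0$, (IC3) $\left|\frac{\omega_1}{k_1}\right|\le\cdots\le\left|\frac{\omega_n}{k_n}\right|$. Let $\sigma\in\{-1,+1\}^n$, $\sigma_+=\{\mu:\sigma_\mu=+1\}$, and $f_\sigma(R)=-R+\frac1n\sum_{\mu=1}^n\sigma_\mu\sqrt{k_\mu^2R-\omega_\mu^2}$. Then every positive root of $f_\sigma$ lies in the interval $$\left[\left(\frac{\omega_n}{k_n}\right)^2,\ \left(\frac1n\sum_{\mu\in\sigma_+}k_\mu\right)^2\right].$$
   Context: Square roots are nonnegative real square roots; a positive root of $f_\sigma$ is a real $R>0$ with $k_\mu^2R-\omega_\mu^2\ge0$ for all $\mu$ and $f_\sigma(R)=0$. *)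

From mathcomp Require Import all_boot all_order all_algebra.
Set Implicit Arguments. Unset Strict Implicit. Unset Printing Implicit Defensive.
Import Order.TTheory GRing.Theory Num.Theory.
Local Open Scope ring_scope.

(* sigma : 'I_n -> bool encodes sigma_mu = +1 (true) or -1 (false). *)
Definition sgn (R : numDomainType) (b : bool) : R := if b then 1 else -1.

Definition f_sigma (R : rcfType) (n : nat) (omega k : 'I_n -> R)
  (sigma : 'I_n -> bool) (x : R) : R :=
  - x + n%:R^-1 * \sum_(mu < n) sgn R (sigma mu) * Num.sqrt (k mu ^+ 2 * x - omega mu ^+ 2).

Definition positive_root (R : rcfType) (n : nat) (omega k : 'I_n -> R)
  (sigma : 'I_n -> bool) (x : R) : Prop :=
  0 < x /\ (forall mu, 0 <= k mu ^+ 2 * x - omega mu ^+ 2) /\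
  f_sigma omega k sigma x = 0.

From mathcomp Require Import all_boot all_order all_algebra.
Import Order.TTheory GRing.Theory Num.Theory.
Local Open Scope ring_scope.

(* The lower bound is just the nonnegativity of the radicand of the last
   term.  For the upper bound, drop the negative terms of f_sigma and bound
   each remaining root by sqrt(k_mu^2 R) = k_mu sqrt R; a root then satisfies
   R <= sqrt R * S with S = (1/n) sum_{sigma_+} k_mu, i.e. sqrt R <= S. *)

Lemma sqr_div_le_of_radicand_ge0 (R : realFieldType) (w c x : R) :
  0 < c -> 0 <= c ^+ 2 * x - w ^+ 2 -> (w / c) ^+ 2 <= x.
Proof.
move=> c_gt0; rewrite subr_ge0 => le_w_cx.
by rewrite expr_div_n ler_pdivrMr ?exprn_gt0 // mulrC.
Qed.

Lemma sqrt_radicand_le (R : rcfType) (w c x : R) :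
  Num.sqrt (c ^+ 2 * x - w ^+ 2) <= `|c| * Num.sqrt x.
Proof.
rewrite -sqrtr_sqr -sqrtrM ?sqr_ge0 //.
by apply: ler_wsqrtr; rewrite lerBlDr lerDl sqr_ge0.
Qed.

Lemma sum_sgn_le_sum_pos (R : numDomainType) (I : finType)
    (sigma : I -> bool) (a : I -> R) :
  (forall i, 0 <= a i) ->
  \sum_i sgn R (sigma i) * a i <= \sum_(i | sigma i) a i.
Proof.
move=> a_ge0; rewrite [leRHS]big_mkcond /=; apply: ler_sum => i _.
by case: (sigma i); rewrite /sgn ?mul1r // mulN1r oppr_le0.
Qed.

Lemma f_sigma_root_le_sqrt_mul (R : rcfType) (n : nat) (omega k : 'I_n -> R)
    (sigma : 'I_n -> bool) (x : R) :
  (0 < n)%N -> (forall mu, 0 <= k mu) -> f_sigma omega k sigma x = 0 ->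
  x <= Num.sqrt x * (n%:R^-1 * \sum_(mu < n | sigma mu) k mu).
Proof.
move=> n_gt0 k_ge0 /eqP; rewrite /f_sigma addrC subr_eq0 => /eqP root_eq.
rewrite -{1}root_eq mulrCA ler_pM2l ?invr_gt0 ?ltr0n // mulr_sumr.
set radical := fun mu => Num.sqrt (k mu ^+ 2 * x - omega mu ^+ 2).
apply: le_trans (@sum_sgn_le_sum_pos _ _ sigma radical (fun mu => sqrtr_ge0 _)) _.
apply: ler_sum => mu _; rewrite mulrC -(ger0_norm (k_ge0 mu)).
exact: sqrt_radicand_le.
Qed.

Lemma le_sqr_of_le_sqrt_mul (R : rcfType) (x c : R) :
  0 < x -> x <= Num.sqrt x * c -> x <= c ^+ 2.
Proof.
move=> x_gt0; have s_gt0 : 0 < Num.sqrt x by rewrite sqrtr_gt0.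
rewrite -{1 3}(sqr_sqrtr (ltW x_gt0)) expr2 ler_pM2l // => le_sc.
by rewrite ler_sqr // nnegrE ltW // (lt_le_trans s_gt0).
Qed.

Theorem proposition1 (R : rcfType) (n : nat) (hn : (2 <= n)%N)
  (omega k : 'I_n -> R) (sigma : 'I_n -> bool)
  (hk : forall mu, 0 < k mu)
  (IC1 : \sum_(mu < n) omega mu = 0)
  (IC2 : exists mu, omega mu != 0)
  (IC3 : forall i j : 'I_n, (i <= j)%N -> `|omega i / k i| <= `|omega j / k j|)
  (x : R) (hx : positive_root omega k sigma x) :
  (forall last : 'I_n, val last = n.-1 -> (omega last / k last) ^+ 2 <= x) /\
  x <= (n%:R^-1 * \sum_(mu < n | sigma mu) k mu) ^+ 2.
Proof.
case: hx => x_gt0 [radicand_ge0 root_x]; split.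
  by move=> l _; exact: sqr_div_le_of_radicand_ge0.
apply: le_sqr_of_le_sqrt_mul x_gt0 _.
apply: f_sigma_root_le_sqrt_mul root_x => [|mu]; last exact: ltW.
exact: leq_trans hn.
Qed.
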